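(* Let $S$ be a connected compact surface (closed, or with boundary) with a simplicial triangulation $T$ (so any two vertices span at most one edge), and let $\mathbf{d}_1,\mathbf{d}_2$ be two Euclidean polyhedral metrics on $(S,T)$, i.e. $(S,T,\mathbf{d}_1)$ and $(S,T,\mathbf{d}_2)$ are Euclidean polyhedral surfaces. Let $L_1,L_2$ be their discrete Laplace matrices. Then $L_1=L_2$ if and only if there is a constant $c>0$ with $\mathbf{d}_2=c\,\mathbf{d}_1$ (i.e. every edge length is multiplied by the same factor $c$).
   Context: An Euclidean polyhedral surface is a triple $(S,T,\mathbf{d})$ where $S$ is a surface, $T$ a triangulation of $S$ with vertices $v_1,\dots,v_N$, edges $e_1,\dots,e_m$ and faces $F$, and $\mathbf{d}$ is a metric on $S$ whose restriction to each triangle is isometric to a Euclidean triangle; equivalently $\mathbf{d}$ is given by edge lengths $d_k=d(e_k)>0$ satisfying the strict triangle inequalities on every face. Cotangent edge weight: if $[v_i,v_j]$ is a boundary edge lying in the single triangle $[v_i,v_j,v_k]$ and $\alpha$ is the angle at $v_k$, then $w_{ij}=\tfrac12\cot\alpha$; if $[v_i,v_j]$ is an interior edge and $\alpha,\beta$ are the two angles opposite to it in the two adjacent triangles, then $w_{ij}=\tfrac12(\cot\alpha+\cot\beta)$; $w_{ij}=0$ if $v_i,v_j$ are not joined by an edge. The discrete Laplace matrix $L=(L_{ij})$ is the $N\times N$ matrix with $L_{ij}=-w_{ij}$ for $i\neq j$ and $L_{ii}=\sum_k w_{ik}$. *)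

From Stdlib Require Import Reals.
From mathcomp Require Import all_boot.
Set Implicit Arguments. Unset Strict Implicit. Unset Printing Implicit Defensive.

(* A face is a 3-element vertex set,
   an edge a 2-element vertex set; using sets encodes simpliciality (two
   vertices span at most one edge, three at most one face). *)
Definition Vert (N : nat) := 'I_N.

Definition is_edge (N : nat) (F : {set {set 'I_N}}) (e : {set 'I_N}) : bool :=
  (#|e| == 2) && [exists f in F, e \subset f].

(* Combinatorial triangulated connected compact surface (possibly with
   boundary): finitely many triangles, every vertex lies in a triangle, every
   edge lies in one (boundary) or two (interior) triangles, the link of every
   vertex is connected (a path or a cycle), and the 1-skeleton is connected. *)
Definition link_rel (N : nat) (F : {set {set 'I_N}}) (v : 'I_N) : rel 'I_N :=
  fun u w => [set u; w; v] \in F.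

Definition skel_rel (N : nat) (F : {set {set 'I_N}}) : rel 'I_N :=
  fun u w => is_edge F [set u; w].

Definition surface_triangulation (N : nat) (F : {set {set 'I_N}}) : Prop :=
  F != set0 /\
  [/\ (forall f, f \in F -> #|f| = 3),
      (forall v : 'I_N, exists f, f \in F /\ v \in f),
      (forall e, is_edge F e -> #|[set f in F | e \subset f]| \in [:: 1; 2]),
      (forall v u w : 'I_N, is_edge F [set u; v] -> is_edge F [set w; v] ->
          connect (link_rel F v) u w)
    & (forall u w : 'I_N, connect (skel_rel F) u w)].

Local Open Scope R_scope.

Definition polyhedral_metric (N : nat) (F : {set {set 'I_N}})
    (d : {set 'I_N} -> R) : Prop :=
  (forall e, is_edge F e -> 0 < d e) /\
  (forall i j k : 'I_N, [set i; j; k] \in F ->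
     d [set i; j] < d [set i; k] + d [set k; j]).

Definition cot (x : R) : R := cos x / sin x.

(* Angle opposite to the side of length c in a Euclidean triangle with side
   lengths a, b, c (law of cosines). *)
Definition opp_angle (a b c : R) : R :=
  acos ((a * a + b * b - c * c) / (2 * a * b)).

Definition cot_weight (N : nat) (F : {set {set 'I_N}}) (d : {set 'I_N} -> R)
    (i j : 'I_N) : R :=
  \big[Rplus/0]_(k < N | (i != j) && ([set i; j; k] \in F))
     (/ 2 * cot (opp_angle (d [set i; k]) (d [set j; k]) (d [set i; j]))).

Definition laplace (N : nat) (F : {set {set 'I_N}}) (d : {set 'I_N} -> R)
    (i j : 'I_N) : R :=
  if i == j then \big[Rplus/0]_(k < N) cot_weight F d i k
  else - cot_weight F d i j.

(** The cotangent weights of a metric [d] pair with squared edge lengths [q]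
    to the energy [sum_ij w_ij(d) q_ij], which splits into one term per face.
    If [q] are the squared lengths of a second metric [d'], the face term is a
    mixed area of the two triangles, and the reverse Cauchy-Schwarz inequality
    for the Lorentzian form polarizing Heron's formula bounds it below by the
    term of [d'] itself (twice its area), with equality exactly when the two
    triangles are similar.  So equal Laplacians force every face of [d'] to be
    similar to the corresponding face of [d]; since faces around a vertex are
    linked and the 1-skeleton is connected, the similarity ratio is global. *)

From Stdlib Require Import Reals Lra Psatz.
From HB Require Import structures.
From mathcomp Require Import all_boot.

Set Implicit Arguments. Unset Strict Implicit. Unset Printing Implicit Defensive.

Local Open Scope R_scope.

(* For squared side lengths [P1, P2, P3], [area_form P1 P2 P3] is 16 times the
   squared area of the triangle (Heron); [mixed_area_form] is its polarization. *)
Definition mixed_area_form (P1 P2 P3 Q1 Q2 Q3 : R) : R :=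
  (P2 + P3 - P1) * Q1 + (P1 + P3 - P2) * Q2 + (P1 + P2 - P3) * Q3.

Definition area_form (P1 P2 P3 : R) : R := mixed_area_form P1 P2 P3 P1 P2 P3.

Section ReverseCauchySchwarz.

Variables P1 P2 P3 Q1 Q2 Q3 : R.

Let sP := P1 + P2 + P3.
Let sQ := Q1 + Q2 + Q3.
Let B := mixed_area_form P1 P2 P3 Q1 Q2 Q3.
Let HP := area_form P1 P2 P3.
Let HQ := area_form Q1 Q2 Q3.
(* vanishes exactly when [Q] is proportional to [P] *)
Let defect := (sP * Q1 - sQ * P1) ^ 2 + (sP * Q2 - sQ * P2) ^ 2 + (sP * Q3 - sQ * P3) ^ 2.

Lemma defect_ge0 : 0 <= defect.
Proof.
by rewrite /defect; have := pow2_ge_0 (sP * Q1 - sQ * P1);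
  have := pow2_ge_0 (sP * Q2 - sQ * P2); have := pow2_ge_0 (sP * Q3 - sQ * P3); lra.
Qed.

Lemma mixed_area_form_pos : 0 < sP -> 0 < sQ -> 0 < HP -> 0 < HQ -> 0 < B.
Proof.
move=> sP_gt0 sQ_gt0 HP_gt0 HQ_gt0.
have B_sumE : 2 * sQ * sP * B = sP ^ 2 * HQ + sQ ^ 2 * HP + 2 * defect.
  by rewrite /defect /B /HP /HQ /sP /sQ /area_form /mixed_area_form; ring.
have : 0 < sP ^ 2 * HQ + sQ ^ 2 * HP.
  by apply: Rplus_lt_0_compat; apply: Rmult_lt_0_compat => //; apply: pow_lt.
have : 0 < 2 * sQ * sP by nra.
have := defect_ge0; clearbody sP sQ B HP HQ defect; nra.
Qed.

Lemma mixed_area_form_lorentz :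
  sP ^ 2 * (B ^ 2 - HP * HQ) = (HP * sQ - B * sP) ^ 2 + 2 * HP * defect.
Proof. by rewrite /defect /B /HP /HQ /sP /sQ /area_form /mixed_area_form; ring. Qed.

Lemma mixed_area_form_sqr_ge : sP <> 0 -> 0 <= HP -> HP * HQ <= B ^ 2.
Proof.
move=> sP_neq0 HP_ge0; have lor := mixed_area_form_lorentz.
have : 0 <= HP * defect by apply: Rmult_le_pos => //; apply: defect_ge0.
have := pow2_ge_0 (HP * sQ - B * sP); have : 0 < sP ^ 2 by nra.
clearbody sP sQ B HP HQ defect; nra.
Qed.

Lemma mixed_area_form_sqr_eq :
  sP <> 0 -> 0 < HP -> B ^ 2 = HP * HQ ->
  [/\ sP * Q1 = sQ * P1, sP * Q2 = sQ * P2 & sP * Q3 = sQ * P3].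
Proof.
move=> sP_neq0 HP_gt0 BE; have lor := mixed_area_form_lorentz; rewrite BE in lor.
rewrite Rminus_diag Rmult_0_r in lor.
have : HP * defect = 0 by have := pow2_ge_0 (HP * sQ - B * sP); have := defect_ge0; nra.
case/Rmult_integral => [|defect0]; first lra.
move: defect0; rewrite /defect => ?.
have := pow2_ge_0 (sP * Q1 - sQ * P1); have := pow2_ge_0 (sP * Q2 - sQ * P2).
have := pow2_ge_0 (sP * Q3 - sQ * P3); split; nra.
Qed.

Lemma sqrt_area_form_mul_le :
  0 < sP -> 0 < sQ -> 0 < HP -> 0 < HQ ->
  sqrt HP * sqrt HQ <= B /\
  (sqrt HP * sqrt HQ = B ->
   [/\ sP * Q1 = sQ * P1, sP * Q2 = sQ * P2 & sP * Q3 = sQ * P3]).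
Proof.
move=> sP_gt0 sQ_gt0 HP_gt0 HQ_gt0.
have B_gt0 := mixed_area_form_pos sP_gt0 sQ_gt0 HP_gt0 HQ_gt0.
have sqrtE : (sqrt HP * sqrt HQ) ^ 2 = HP * HQ.
  by rewrite -sqrt_mult; try lra; rewrite pow2_sqrt; nra.
have sqrt_ge0 : 0 <= sqrt HP * sqrt HQ by apply: Rmult_le_pos; apply: sqrt_pos.
have := mixed_area_form_sqr_ge (Rgt_not_eq _ _ sP_gt0) (Rlt_le _ _ HP_gt0).
rewrite -sqrtE => sqr_le; split; first nra.
move=> E; apply: mixed_area_form_sqr_eq => //; first lra.
by rewrite -E sqrtE.
Qed.

End ReverseCauchySchwarz.

Definition is_triangle (a b c : R) : Prop := [/\ a < b + c, b < a + c & c < a + b].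

Lemma area_form_sqr_pos a b c :
  is_triangle a b c -> 0 < area_form (a * a) (b * b) (c * c).
Proof.
case=> ha hb hc.
have -> : area_form (a * a) (b * b) (c * c)
        = (a + b + c) * ((b + c - a) * ((a + c - b) * (a + b - c))).
  by rewrite /area_form /mixed_area_form; ring.
by repeat apply: Rmult_lt_0_compat; lra.
Qed.

Lemma cot_opp_angle a b c : is_triangle a b c ->
  cot (opp_angle a b c) = (a * a + b * b - c * c) / sqrt (area_form (a * a) (b * b) (c * c)).
Proof.
move=> abc; have H_gt0 := area_form_sqr_pos abc; case: abc => ha hb hc.
set H := area_form _ _ _ in H_gt0 *.
set t := (a * a + b * b - c * c) / (2 * a * b).
have ab_gt0 : 0 < 2 * a * b by nra.
have sin_sqrE : 1 - t² = H / (2 * a * b) ^ 2.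
  by rewrite /t /H /area_form /mixed_area_form /Rsqr; field; lra.
have t_bound : -1 <= t <= 1.
  have : 0 < H / (2 * a * b) ^ 2 by apply: Rdiv_lt_0_compat => //; apply: pow_lt.
  by rewrite -sin_sqrE /Rsqr => ?; split; nra.
have sqrt_H_gt0 : 0 < sqrt H by apply: sqrt_lt_R0.
have sinE : sqrt (1 - t²) = sqrt H / (2 * a * b).
  rewrite sin_sqrE sqrt_div_alt; last by apply: pow_lt.
  by rewrite sqrt_pow2 //; lra.
rewrite /cot /opp_angle -/t cos_acos // sin_acos // sinE /t; field; lra.
Qed.

Definition cot_face_energy (x y z X Y Z : R) : R :=
  / 2 * cot (opp_angle z y x) * (X * X) + / 2 * cot (opp_angle x z y) * (Y * Y)
  + / 2 * cot (opp_angle y x z) * (Z * Z).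

Lemma cot_face_energyE x y z X Y Z : is_triangle x y z ->
  cot_face_energy x y z X Y Z
  = / 2 * (mixed_area_form (x * x) (y * y) (z * z) (X * X) (Y * Y) (Z * Z)
           / sqrt (area_form (x * x) (y * y) (z * z))).
Proof.
move=> xyz; have sqrt_gt0 := sqrt_lt_R0 _ (area_form_sqr_pos xyz).
case: xyz => hx hy hz.
rewrite /cot_face_energy !cot_opp_angle; try by split; lra.
have sym1 : area_form (z * z) (y * y) (x * x) = area_form (x * x) (y * y) (z * z)
  by rewrite /area_form /mixed_area_form; ring.
have sym2 : area_form (x * x) (z * z) (y * y) = area_form (x * x) (y * y) (z * z)
  by rewrite /area_form /mixed_area_form; ring.
have sym3 : area_form (y * y) (x * x) (z * z) = area_form (x * x) (y * y) (z * z)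
  by rewrite /area_form /mixed_area_form; ring.
by rewrite sym1 sym2 sym3 /mixed_area_form; field; lra.
Qed.

(* Twice the area of the triangle. *)
Lemma cot_face_energy_self X Y Z : is_triangle X Y Z ->
  cot_face_energy X Y Z X Y Z = / 2 * sqrt (area_form (X * X) (Y * Y) (Z * Z)).
Proof.
move=> XYZ; rewrite cot_face_energyE // -/(area_form _ _ _).
have H_gt0 := area_form_sqr_pos XYZ.
rewrite -{1}(sqrt_sqrt _ (Rlt_le _ _ H_gt0)); field.
by apply: Rgt_not_eq; apply: sqrt_lt_R0.
Qed.

Lemma ratio_eq_of_sqr s t a b A C : 0 < s -> 0 < a -> 0 < b -> 0 < A -> 0 < C ->
  s * (A * A) = t * (a * a) -> s * (C * C) = t * (b * b) -> A / a = C / b.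
Proof.
move=> s_gt0 a_gt0 b_gt0 A_gt0 C_gt0 eA eC.
have sqrE : (A * b) ^ 2 = (C * a) ^ 2.
  apply: (Rmult_eq_reg_l s); last lra.
  rewrite (_ : s * (A * b) ^ 2 = s * (A * A) * (b * b)); last by ring.
  rewrite eA (_ : s * (C * a) ^ 2 = s * (C * C) * (a * a)); last by ring.
  by rewrite eC; ring.
have : A * b = C * a by apply: Rsqr_inj; rewrite /Rsqr; nra.
by move=> E; apply: (Rmult_eq_reg_r (a * b)); [field_simplify; lra | nra].
Qed.

Lemma cot_face_energy_ge x y z X Y Z : is_triangle x y z -> is_triangle X Y Z ->
  cot_face_energy X Y Z X Y Z <= cot_face_energy x y z X Y Z /\
  (cot_face_energy X Y Z X Y Z = cot_face_energy x y z X Y Z ->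
   X / x = Y / y /\ Y / y = Z / z).
Proof.
move=> xyz XYZ; rewrite cot_face_energy_self // cot_face_energyE //.
have [] := sqrt_area_form_mul_le (P1 := x * x) (P2 := y * y) (P3 := z * z)
             (Q1 := X * X) (Q2 := Y * Y) (Q3 := Z * Z).
- by case: xyz; nra.
- by case: XYZ; nra.
- exact: area_form_sqr_pos.
- exact: area_form_sqr_pos.
set sx := sqrt _; set sX := sqrt _; set B := mixed_area_form _ _ _ _ _ _.
set sp := x * x + y * y + z * z; set sq := X * X + Y * Y + Z * Z.
have sp_gt0 : 0 < sp by case: xyz; rewrite /sp; nra.
have sx_gt0 : 0 < sx by apply: sqrt_lt_R0; apply: area_form_sqr_pos.
move=> le eq_prop; split.
  by apply: (Rmult_le_reg_l sx) => //; field_simplify; lra.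
move=> E; have [e1 e2 e3] : [/\ sp * (X * X) = sq * (x * x), sp * (Y * Y) = sq * (y * y)
                              & sp * (Z * Z) = sq * (z * z)].
  by apply: eq_prop; rewrite (_ : sX = B / sx); [field | ]; lra.
by case: xyz => ? ? ?; case: XYZ => ? ? ?; split; apply: (ratio_eq_of_sqr (t := sq) sp_gt0); lra.
Qed.

HB.instance Definition _ :=
  Monoid.isComLaw.Build R 0 Rplus (fun a b c => esym (Rplus_assoc a b c)) Rplus_comm Rplus_0_l.

Lemma big_Rle (I : finType) (P : pred I) (f g : I -> R) :
  (forall x, f x <= g x) -> \big[Rplus/0]_(x | P x) f x <= \big[Rplus/0]_(x | P x) g x.
Proof. by move=> fg; apply: (big_ind2 Rle) => // *; lra. Qed.

Lemma big_Rle_eq (I : finType) (f g : I -> R) :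
  (forall x, f x <= g x) -> \big[Rplus/0]_(x : I) f x = \big[Rplus/0]_(x : I) g x ->
  forall x, f x = g x.
Proof.
move=> fg + x; rewrite (bigD1 x) // [in X in _ = X](bigD1 x) //=.
have : \big[Rplus/0]_(y | y != x) f y <= \big[Rplus/0]_(y | y != x) g y.
  exact: big_Rle.
by have := fg x; lra.
Qed.

Lemma big_Rplus3D n (f g : 'I_n -> 'I_n -> 'I_n -> R) :
  \big[Rplus/0]_(i < n) \big[Rplus/0]_(j < n) \big[Rplus/0]_(k < n) (f i j k + g i j k) =
  \big[Rplus/0]_(i < n) \big[Rplus/0]_(j < n) \big[Rplus/0]_(k < n) f i j k +
  \big[Rplus/0]_(i < n) \big[Rplus/0]_(j < n) \big[Rplus/0]_(k < n) g i j k.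
Proof.
rewrite -big_split; apply: eq_bigr => i _; rewrite -big_split.
by apply: eq_bigr => j _; rewrite -big_split.
Qed.

Lemma big_Rplus_rotr3 n (f : 'I_n -> 'I_n -> 'I_n -> R) :
  \big[Rplus/0]_(i < n) \big[Rplus/0]_(j < n) \big[Rplus/0]_(k < n) f i j k =
  \big[Rplus/0]_(i < n) \big[Rplus/0]_(j < n) \big[Rplus/0]_(k < n) f k i j.
Proof. by rewrite exchange_big; apply: eq_bigr => i _; rewrite exchange_big. Qed.

Lemma big_Rplus_rotl3 n (f : 'I_n -> 'I_n -> 'I_n -> R) :
  \big[Rplus/0]_(i < n) \big[Rplus/0]_(j < n) \big[Rplus/0]_(k < n) f j k i =
  \big[Rplus/0]_(i < n) \big[Rplus/0]_(j < n) \big[Rplus/0]_(k < n) f i j k.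
Proof. exact: (big_Rplus_rotr3 (fun i j k => f j k i)). Qed.

Lemma set3C23 (T : finType) (i j k : T) : [set i; k; j] = [set i; j; k].
Proof. by apply/setP => x; rewrite !inE orbAC. Qed.

Lemma set3_rotl (T : finType) (i j k : T) : [set j; k; i] = [set i; j; k].
Proof. by apply/setP => x; rewrite !inE orbC orbA. Qed.

Section Triangulation.

Variables (N : nat) (F : {set {set 'I_N}}).
Hypothesis HS : surface_triangulation F.

Lemma face_neq i j k : [set i; j; k] \in F -> i != j.
Proof.
case: HS => _ [card3 _ _ _ _] /card3; case: eqP => // ->.
by rewrite setUid cards2; case: (j != k).
Qed.

Lemma face_edge i j k : [set i; j; k] \in F -> is_edge F [set i; j].
Proof.
move=> f_in; rewrite /is_edge cards2 (face_neq f_in) /=.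
apply/existsP; exists [set i; j; k]; rewrite f_in /=.
by apply/subsetP => x; rewrite !inE => /orP[] ->; rewrite ?orbT.
Qed.

Lemma face_triangle d i j k : polyhedral_metric F d -> [set i; j; k] \in F ->
  is_triangle (d [set i; j]) (d [set j; k]) (d [set i; k]).
Proof.
case=> _ tri f_in.
have f2 : [set j; k; i] \in F by rewrite set3_rotl.
have f3 : [set i; k; j] \in F by rewrite set3C23.
have := tri _ _ _ f_in; have := tri _ _ _ f2; have := tri _ _ _ f3.
rewrite !(setUC [set k]) (setUC [set j] [set i]) => h1 h2 h3.
by split; [rewrite Rplus_comm; exact: h3 | exact: h2 | exact: h1].
Qed.

Definition cot_term (d q : {set 'I_N} -> R) (i j k : 'I_N) : R :=
  if [set i; j; k] \in F
  then / 2 * cot (opp_angle (d [set i; k]) (d [set j; k]) (d [set i; j])) * q [set i; j]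
  else 0.

Lemma cot_weight_mulr d q i j :
  cot_weight F d i j * q [set i; j] = \big[Rplus/0]_(k < N) cot_term d q i j k.
Proof.
rewrite /cot_weight (big_morph (fun x => x * q [set i; j]) (id1 := 0) (op1 := Rplus));
  last (by rewrite Rmult_0_l); last by move=> a b; rewrite Rmult_plus_distr_r.
rewrite big_mkcond; apply: eq_bigr => k _; rewrite /cot_term.
case f_in: ([set i; j; k] \in F); last by rewrite andbF.
by rewrite andbT (face_neq f_in).
Qed.

Definition face_cycle_energy (d q : {set 'I_N} -> R) (i j k : 'I_N) : R :=
  cot_term d q i j k + cot_term d q j k i + cot_term d q k i j.

Lemma sum_face_cycle_energy d q :
  \big[Rplus/0]_(i < N) \big[Rplus/0]_(j < N) \big[Rplus/0]_(k < N) face_cycle_energy d q i j k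
  = 3 * \big[Rplus/0]_(i < N) \big[Rplus/0]_(j < N) \big[Rplus/0]_(k < N) cot_term d q i j k.
Proof.
rewrite /face_cycle_energy !big_Rplus3D.
by rewrite (big_Rplus_rotl3 (cot_term d q)) -(big_Rplus_rotr3 (cot_term d q)); ring.
Qed.

Lemma face_cycle_energyE d d' i j k : [set i; j; k] \in F ->
  face_cycle_energy d (fun e => d' e * d' e) i j k
  = cot_face_energy (d [set i; j]) (d [set j; k]) (d [set i; k])
                    (d' [set i; j]) (d' [set j; k]) (d' [set i; k]).
Proof.
move=> f_in; have f2 : [set j; k; i] \in F by rewrite set3_rotl.
have f3 : [set k; i; j] \in F by rewrite -(set3_rotl k i j).
by rewrite /face_cycle_energy /cot_term f_in f2 f3 !(setUC [set k]) (setUC [set j] [set i]).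
Qed.

Lemma face_cycle_energy_notin d q i j k : [set i; j; k] \notin F ->
  face_cycle_energy d q i j k = 0.
Proof.
move/negbTE=> f_out; have f2 : [set j; k; i] \in F = false by rewrite set3_rotl.
have f3 : [set k; i; j] \in F = false by rewrite -(set3_rotl k i j).
by rewrite /face_cycle_energy /cot_term f_out f2 f3; ring.
Qed.

Lemma cot_weight_eq_face_similar d1 d2 :
  polyhedral_metric F d1 -> polyhedral_metric F d2 ->
  (forall i j, cot_weight F d1 i j = cot_weight F d2 i j) ->
  forall i j k, [set i; j; k] \in F ->
    d2 [set i; j] / d1 [set i; j] = d2 [set j; k] / d1 [set j; k] /\
    d2 [set j; k] / d1 [set j; k] = d2 [set i; k] / d1 [set i; k].
Proof.
move=> H1 H2 W; set q := fun e => d2 e * d2 e.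
have face_le i j k : face_cycle_energy d2 q i j k <= face_cycle_energy d1 q i j k.
  have [f_in | f_out] := boolP ([set i; j; k] \in F); last first.
    by rewrite !face_cycle_energy_notin //; lra.
  rewrite !face_cycle_energyE //.
  by have [] := cot_face_energy_ge (face_triangle H1 f_in) (face_triangle H2 f_in).
have sum_eq :
    \big[Rplus/0]_(i < N) \big[Rplus/0]_(j < N) \big[Rplus/0]_(k < N) face_cycle_energy d2 q i j k
  = \big[Rplus/0]_(i < N) \big[Rplus/0]_(j < N) \big[Rplus/0]_(k < N) face_cycle_energy d1 q i j k.
  rewrite !sum_face_cycle_energy; congr (_ * _).
  by apply: eq_bigr => i _; apply: eq_bigr => j _; rewrite -!cot_weight_mulr W.
have face_eq i j k : face_cycle_energy d2 q i j k = face_cycle_energy d1 q i j k.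
  have Ei := big_Rle_eq (fun i => big_Rle _ (fun j => big_Rle _ (face_le i j))) sum_eq i.
  have Ej := big_Rle_eq (fun j => big_Rle _ (face_le i j)) Ei j.
  exact: big_Rle_eq (face_le i j) Ej k.
move=> i j k f_in; have := face_eq i j k; rewrite !face_cycle_energyE //.
by have [_] := cot_face_energy_ge (face_triangle H1 f_in) (face_triangle H2 f_in).
Qed.

Section FaceInvariant.

Variables (T : Type) (f : {set 'I_N} -> T).
Hypothesis f_face : forall i j k, [set i; j; k] \in F ->
  f [set i; j] = f [set j; k] /\ f [set j; k] = f [set i; k].

Lemma link_connect_eq v u w : connect (link_rel F v) u w -> f [set u; v] = f [set w; v].
Proof.
case/connectP=> p + ->; elim: p u => [|a p IHp] u //= /andP [uav_in path_p].
by rewrite -(IHp a path_p); have [_ ->] := f_face uav_in.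
Qed.

(* Around a vertex [x], [f] takes a single value on all edges at [x]
   (connected link); moving [x] along the connected 1-skeleton, this value
   never changes. *)
Lemma face_invariant_edge_const e e' : is_edge F e -> is_edge F e' -> f e' = f e.
Proof.
case: HS => _ [_ _ _ link_conn skel_conn].
move=> e_edge e'_edge; case/andP: (e_edge) (e'_edge).
move=> /cards2P [a [b [_ eE]]] _ /andP [/cards2P [a' [b' [_ e'E]]] _].
rewrite {}eE {}e'E in e_edge e'_edge *.
pose star_at x := forall y, is_edge F [set y; x] -> f [set y; x] = f [set a; b].
have star_b : star_at b by move=> y yb; apply: link_connect_eq; apply: link_conn.
have star_step s t : is_edge F [set s; t] -> star_at s -> star_at t.
  move=> st star_s y yt; rewrite (link_connect_eq (link_conn _ _ _ yt st)) setUC.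
  by apply: star_s; rewrite setUC.
have star_path p s : star_at s -> path (skel_rel F) s p -> star_at (last s p).
  elim: p s => [|c p IHp] s star_s //= /andP [sc path_p].
  exact: IHp (star_step _ _ sc star_s) path_p.
case/connectP: (skel_conn b b') => p path_p E.
by move: e'_edge; rewrite E; apply: star_path.
Qed.

End FaceInvariant.

Lemma cot_weight_eq_homothetic d1 d2 :
  polyhedral_metric F d1 -> polyhedral_metric F d2 ->
  (forall i j, cot_weight F d1 i j = cot_weight F d2 i j) ->
  exists c, 0 < c /\ forall e, is_edge F e -> d2 e = c * d1 e.
Proof.
move=> H1 H2 W; set ratio := fun e => d2 e / d1 e.
have ratio_const := face_invariant_edge_const (f := ratio)
  (cot_weight_eq_face_similar H1 H2 W).
case: (pickP (is_edge F)) => [e0 e0_edge | no_edge]; last first.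
  by exists 1; split; [lra | move=> e; rewrite no_edge].
exists (ratio e0); split.
  by apply: Rdiv_lt_0_compat; [apply: H2.1 | apply: H1.1].
move=> e e_edge; rewrite -(ratio_const _ _ e0_edge e_edge) /ratio.
by field; apply: Rgt_not_eq; apply: H1.1.
Qed.

Lemma opp_angle_scale c a b z : 0 < c -> 0 < a -> 0 < b ->
  opp_angle (c * a) (c * b) (c * z) = opp_angle a b z.
Proof. by move=> c_gt0 a_gt0 b_gt0; rewrite /opp_angle; f_equal; field; lra. Qed.

Lemma cot_weight_scale d1 d2 c : polyhedral_metric F d1 -> 0 < c ->
  (forall e, is_edge F e -> d2 e = c * d1 e) ->
  forall i j, cot_weight F d1 i j = cot_weight F d2 i j.
Proof.
move=> [d1_pos _] c_gt0 d2E i j; apply: eq_bigr => k /andP [_ f_in].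
have ij := face_edge f_in.
have ik : is_edge F [set i; k] by apply: (face_edge (k := j)); rewrite set3C23.
have jk : is_edge F [set j; k] by apply: (face_edge (k := i)); rewrite set3_rotl.
by rewrite !d2E // opp_angle_scale //; apply: d1_pos.
Qed.

End Triangulation.

Lemma laplace_eq_iff_cot_weight_eq N (F : {set {set 'I_N}}) d1 d2 :
  (forall i j, laplace F d1 i j = laplace F d2 i j) <->
  (forall i j, cot_weight F d1 i j = cot_weight F d2 i j).
Proof.
split=> [L i j | W i j]; last first.
  by rewrite /laplace; case: eqP => _; [apply: eq_bigr => k _ | ]; rewrite W.
case: (eqVneq i j) => [<- | ij].
  by rewrite /cot_weight !big_pred0 // => k; rewrite eqxx.
by have := L i j; rewrite /laplace (negbTE ij); lra.
Qed.

Theorem mainTheorem1 (N : nat) (F : {set {set 'I_N}})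
    (d1 d2 : {set 'I_N} -> R) :
  surface_triangulation F ->
  polyhedral_metric F d1 -> polyhedral_metric F d2 ->
  (forall i j : 'I_N, laplace F d1 i j = laplace F d2 i j) <->
  (exists c : R, Rlt 0 c /\ forall e, is_edge F e -> d2 e = Rmult c (d1 e)).
Proof.
move=> HS H1 H2; rewrite laplace_eq_iff_cot_weight_eq; split.
  exact: cot_weight_eq_homothetic.
by case=> c [c_gt0 d2E]; apply: (cot_weight_scale HS H1 c_gt0 d2E).
Qed.
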